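(* Let $\alpha>1$, $\beta\ge0$, and suppose the Fourier coefficients of $V$ satisfy $|v_k(0)|\le c_v e^{-\beta|k|}\langle k\rangle^{-\alpha}$ for all $k\in\mathbb{Z}$ (e.g. $V\in C^{\alpha,\beta,1}$). Then for all $j,k\in\mathbb{Z}$ $$|G_{jk}|\le \frac{3c_v e^{-\beta|j-k|}}{(\langle j\rangle+\langle k\rangle)\langle j-k\rangle^{\alpha}},$$ and for every $n\ge2$ $$|(G^n)_{jk}|\le \frac{(3c_v)^n c_\alpha^{\,n-1}e^{-\beta|j-k|}}{\langle j\rangle\langle k\rangle\langle j-k\rangle^{\alpha}}.$$
   Context: $V(x,t)=\sum_{k\in\mathbb{Z}}v_k(t)e^{ikx}$ is real-valued with $v_0\equiv0$; $\langle k\rangle=|k|+1$. $G$ is the infinite matrix (operator on $l^2(\mathbb{Z})$) with $G_{jk}=0$ if $j^2=k^2$ and $G_{jk}=\frac{v_{j-k}(0)}{j^2-k^2}$ if $j^2\ne k^2$. For $\nu>1$, $c_\nu$ denotes a constant depending only on $\nu$ such that for all $\beta\ge0$ and $s,m\in\mathbb{Z}$: $\sum_{k\in\mathbb{Z}}\frac{e^{-\beta|s-k|-\beta|k-m|}}{\langle s-k\rangle^\nu\langle k-m\rangle^\nu}\le\frac{c_\nu e^{-\beta|s-m|}}{\langle s-m\rangle^\nu}$. *)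

From Stdlib Require Import Reals ZArith.
From Coquelicot Require Import Coquelicot.
Open Scope R_scope.

Definition br (k : Z) : R := IZR (Z.abs k) + 1.

Definition zpsum (f : Z -> C) (N : nat) : C :=
  sum_n (fun i => f (Z.of_nat i - Z.of_nat N)%Z) (2 * N).

Definition rzpsum (f : Z -> R) (N : nat) : R :=
  sum_n (fun i => f (Z.of_nat i - Z.of_nat N)%Z) (2 * N).

(* sum over Z, as the limit of the symmetric partial sums (real and imaginary
   parts); it coincides with the sum over Z for absolutely summable families *)
Definition zsum (f : Z -> C) : C :=
  (real (Lim_seq (fun N => Re (zpsum f N))),
   real (Lim_seq (fun N => Im (zpsum f N)))).

(* the matrix G built from the Fourier coefficients v k = v_k(0) *)
Definition Gmat (v : Z -> C) (j k : Z) : C :=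
  if Z.eqb (j * j) (k * k) then 0%C
  else (v (j - k)%Z / RtoC (IZR (j * j - k * k)))%C.

Fixpoint Gpow (v : Z -> C) (n : nat) (j k : Z) : C :=
  match n with
  | O => if Z.eqb j k then 1%C else 0%C
  | S n' => zsum (fun m => (Gpow v n' j m * Gmat v m k)%C)
  end.

Definition conv_const (nu c : R) : Prop :=
  forall (beta : R), 0 <= beta -> forall (s m : Z),
    ex_finite_lim_seq (rzpsum (fun k =>
       exp (- beta * IZR (Z.abs (s - k)) - beta * IZR (Z.abs (k - m)))
       / (Rpower (br (s - k)) nu * Rpower (br (k - m)) nu))) /\
    real (Lim_seq (rzpsum (fun k =>
       exp (- beta * IZR (Z.abs (s - k)) - beta * IZR (Z.abs (k - m)))
       / (Rpower (br (s - k)) nu * Rpower (br (k - m)) nu))))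
    <= c * exp (- beta * IZR (Z.abs (s - m))) / Rpower (br (s - m)) nu.

(* Off the diagonal [j^2 = k^2] one has [|j^2 - k^2| = |j - k| |j + k| >= |j| + |k|],
   hence [<j> + <k> <= 3 |j^2 - k^2|], and the bound on [G] follows from the decay of
   the coefficients.  For the powers, [(G^(n+1))_jk = sum_m (G^n)_jm G_mk]; if
   [(G^n)_jm] is bounded with denominator [D_m <j - m>^alpha], where [D_m] is
   [<j> + <m>] for [n = 1] and [<j> <m>] for [n >= 2], then
   [<j> <k> <= D_m (<m> + <k>)], so every term is dominated by [<j>^-1 <k>^-1] times
   the convolution summand of the definition of [c_alpha].  Sums over [Z] are limits
   of symmetric partial sums, and a family dominated termwise by a nonnegative family
   with convergent sum has its sum bounded by that limit. *)
From Stdlib Require Import Reals ZArith Lra Lia Psatz.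
From Coquelicot Require Import Coquelicot.
Open Scope R_scope.

Lemma sum_n_sym_S {G : AbelianMonoid} (f : Z -> G) (N : nat) :
  sum_n (fun i => f (Z.of_nat i - Z.of_nat (S N))%Z) (2 * S N) =
  plus (plus (sum_n (fun i => f (Z.of_nat i - Z.of_nat N)%Z) (2 * N))
             (f (Z.of_nat (S N))))
       (f (- Z.of_nat (S N))%Z).
Proof.
  replace (2 * S N)%nat with (S (S (2 * N))) by lia.
  rewrite sum_Sn; unfold sum_n.
  rewrite (sum_n_m_Chasles _ 0 0 (S (2 * N))), sum_n_n, <- sum_n_m_S by lia.
  replace (Z.of_nat (S (S (2 * N))) - Z.of_nat (S N))%Z with (Z.of_nat (S N)) by lia.
  replace (Z.of_nat 0 - Z.of_nat (S N))%Z with (- Z.of_nat (S N))%Z by lia.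
  rewrite (sum_n_m_ext _ (fun i => f (Z.of_nat i - Z.of_nat N)%Z))
    by (intros i; f_equal; lia).
  rewrite <- !plus_assoc, (plus_comm (f _)), <- plus_assoc.
  reflexivity.
Qed.

Lemma zpsum_O (f : Z -> C) : zpsum f 0 = f 0%Z.
Proof. apply sum_O. Qed.

Lemma rzpsum_O (f : Z -> R) : rzpsum f 0 = f 0%Z.
Proof. apply sum_O. Qed.

Lemma zpsum_S (f : Z -> C) (N : nat) :
  zpsum f (S N) = (zpsum f N + f (Z.of_nat (S N)) + f (- Z.of_nat (S N))%Z)%C.
Proof. exact (sum_n_sym_S f N). Qed.

Lemma rzpsum_S (f : Z -> R) (N : nat) :
  rzpsum f (S N) = rzpsum f N + f (Z.of_nat (S N)) + f (- Z.of_nat (S N))%Z.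
Proof. exact (sum_n_sym_S f N). Qed.

Section NonnegSums.

Variables (g : Z -> R) (l : R).
Hypothesis g_ge0 : forall m, 0 <= g m.
Hypothesis g_sum : is_lim_seq (rzpsum g) l.

Lemma rzpsum_le_lim (N : nat) : rzpsum g N <= l.
Proof.
  apply (is_lim_seq_incr_compare _ l g_sum).
  intros n; rewrite rzpsum_S.
  pose proof (g_ge0 (Z.of_nat (S n))); pose proof (g_ge0 (- Z.of_nat (S n))%Z); lra.
Qed.

Lemma lim_rzpsum_ge0 : 0 <= l.
Proof. apply Rle_trans with (g 0%Z); [apply g_ge0 | rewrite <- rzpsum_O; apply rzpsum_le_lim]. Qed.

End NonnegSums.

Lemma Rabs_Im_le_Cmod (z : C) : Rabs (Im z) <= Cmod z.
Proof.
  pose proof (Cmod2_alt z); pose proof (Cmod_ge_0 z).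
  unfold Rabs; destruct Rcase_abs; nra.
Qed.

Section Domination.

Variables (f : Z -> C) (g : Z -> R) (l : R).
Hypothesis f_le_g : forall m, Cmod (f m) <= g m.
Hypothesis g_sum : is_lim_seq (rzpsum g) l.

Let g_ge0 m : 0 <= g m := Rle_trans _ _ _ (Cmod_ge_0 (f m)) (f_le_g m).

Lemma Cmod_zpsum_le (N : nat) : Cmod (zpsum f N) <= rzpsum g N.
Proof.
  induction N as [|N IH].
  - rewrite zpsum_O, rzpsum_O; apply f_le_g.
  - rewrite zpsum_S, rzpsum_S.
    pose proof (Cmod_triangle (zpsum f N + f (Z.of_nat (S N))) (f (- Z.of_nat (S N))%Z)).
    pose proof (Cmod_triangle (zpsum f N) (f (Z.of_nat (S N)))).
    pose proof (f_le_g (Z.of_nat (S N))); pose proof (f_le_g (- Z.of_nat (S N))%Z).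
    lra.
Qed.

(* Adding the nondecreasing partial sums of [g] makes the sequence monotone and
   bounded by [2 l]; subtracting their limit [l] gives the limit of [p] of the sums. *)
Lemma ex_lim_zpsum_coord (p : C -> R) :
  (forall x y, p (x + y)%C = p x + p y) -> (forall z, Rabs (p z) <= Cmod z) ->
  exists a : R, is_lim_seq (fun N => p (zpsum f N)) a.
Proof.
  intros p_add p_le.
  assert (p_le_g : forall m, Rabs (p (f m)) <= g m)
    by (intros m; eapply Rle_trans; [apply p_le | apply f_le_g]).
  assert (mono : ex_finite_lim_seq (fun N => p (zpsum f N) + rzpsum g N)).
  { apply (ex_finite_lim_seq_incr _ (2 * l)).
    - intros N; rewrite zpsum_S, rzpsum_S, !p_add.
      pose proof (p_le_g (Z.of_nat (S N))); pose proof (p_le_g (- Z.of_nat (S N))%Z).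
      revert H H0; unfold Rabs; repeat destruct Rcase_abs; lra.
    - intros N.
      pose proof (Rle_trans _ _ _ (p_le (zpsum f N)) (Cmod_zpsum_le N)).
      pose proof (rzpsum_le_lim g l g_ge0 g_sum N).
      revert H; unfold Rabs; destruct Rcase_abs; lra. }
  destruct mono as [b Hb].
  exists (b - l).
  eapply is_lim_seq_ext; [| apply (is_lim_seq_minus' _ _ _ _ Hb g_sum)].
  intros N; simpl; ring.
Qed.

Lemma Cmod_zsum_le : Cmod (zsum f) <= l.
Proof.
  destruct (ex_lim_zpsum_coord Re (fun _ _ => eq_refl) re_le_Cmod) as [a Ha].
  destruct (ex_lim_zpsum_coord Im (fun _ _ => eq_refl) Rabs_Im_le_Cmod) as [b Hb].
  unfold zsum; rewrite (is_lim_seq_unique _ _ Ha), (is_lim_seq_unique _ _ Hb); simpl.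
  pose proof (lim_rzpsum_ge0 g l g_ge0 g_sum).
  assert (Hab : Rbar_le (a * a + b * b) (l * l)).
  { eapply is_lim_seq_le; [| apply is_lim_seq_plus';
      [apply (is_lim_seq_mult' _ _ _ _ Ha Ha) | apply (is_lim_seq_mult' _ _ _ _ Hb Hb)]
    | apply (is_lim_seq_mult' _ _ _ _ g_sum g_sum)].
    intros N; simpl.
    pose proof (Cmod2_alt (zpsum f N)); pose proof (Cmod_zpsum_le N);
      pose proof (Cmod_ge_0 (zpsum f N)).
    simpl in *; nra. }
  simpl in Hab; unfold Cmod; simpl.
  rewrite <- (sqrt_Rsqr l) by assumption.
  apply sqrt_le_1_alt; unfold Rsqr; nra.
Qed.

End Domination.

Section Delta.

Variables (f : Z -> C) (j : Z).
Hypothesis f_supp : forall m, m <> j -> f m = 0%C.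

Lemma zpsum_delta (N : nat) :
  zpsum f N = if (Z.abs j <=? Z.of_nat N)%Z then f j else 0%C.
Proof.
  induction N as [|N IH].
  - rewrite zpsum_O; destruct (Z.leb_spec (Z.abs j) (Z.of_nat 0)).
    + replace j with 0%Z by lia; reflexivity.
    + apply f_supp; lia.
  - rewrite zpsum_S, IH.
    destruct (Z.leb_spec (Z.abs j) (Z.of_nat N)), (Z.leb_spec (Z.abs j) (Z.of_nat (S N)));
      try lia.
    + rewrite (f_supp (Z.of_nat (S N))), (f_supp (- Z.of_nat (S N))%Z) by lia.
      rewrite !Cplus_0_r; reflexivity.
    + destruct (Z.eq_dec j (Z.of_nat (S N))) as [-> | Hj].
      * rewrite (f_supp (- Z.of_nat (S N))%Z) by lia.
        rewrite Cplus_0_r, Cplus_0_l; reflexivity.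
      * replace j with (- Z.of_nat (S N))%Z in * by lia.
        rewrite (f_supp (Z.of_nat (S N))) by lia.
        rewrite !Cplus_0_l; reflexivity.
    + rewrite (f_supp (Z.of_nat (S N))), (f_supp (- Z.of_nat (S N))%Z) by lia.
      rewrite !Cplus_0_r; reflexivity.
Qed.

Lemma zsum_delta : zsum f = f j.
Proof.
  assert (lim_coord : forall p : C -> R, Lim_seq (fun N => p (zpsum f N)) = p (f j)).
  { intros p; apply is_lim_seq_unique.
    apply (is_lim_seq_ext_loc (fun _ => p (f j))); [| apply is_lim_seq_const].
    exists (Z.abs_nat j); intros N HN; rewrite zpsum_delta.
    destruct (Z.leb_spec (Z.abs j) (Z.of_nat N)); [reflexivity | lia]. }
  unfold zsum; rewrite (lim_coord Re), (lim_coord Im).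
  destruct (f j); reflexivity.
Qed.

End Delta.

Lemma Gpow_1 (v : Z -> C) (j k : Z) : Gpow v 1 j k = Gmat v j k.
Proof.
  simpl; rewrite (zsum_delta _ j).
  - rewrite Z.eqb_refl; apply Cmult_1_l.
  - intros m Hm; destruct (Z.eqb_spec j m); [congruence | apply Cmult_0_l].
Qed.

Lemma Zabs_add_2_le_3_Zabs_sqr_sub (j k : Z) :
  (j * j <> k * k -> Z.abs j + Z.abs k + 2 <= 3 * Z.abs (j * j - k * k))%Z.
Proof.
  intros Hjk.
  replace (j * j - k * k)%Z with ((j - k) * (j + k))%Z by ring; rewrite Z.abs_mul.
  assert (j - k <> 0 /\ j + k <> 0)%Z as [Hm Hp] by (split; intro; apply Hjk; nia).
  destruct (Z.abs_spec j) as [[? ->]|[? ->]]; destruct (Z.abs_spec k) as [[? ->]|[? ->]];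
  destruct (Z.abs_spec (j - k)) as [[? ->]|[? ->]];
  destruct (Z.abs_spec (j + k)) as [[? ->]|[? ->]]; nia.
Qed.

Lemma br_ge1 (k : Z) : 1 <= br k.
Proof. unfold br; pose proof (IZR_le 0 _ (Z.abs_nonneg k)); lra. Qed.

Lemma Rpower_br_pos (k : Z) (a : R) : 0 < Rpower (br k) a.
Proof. apply exp_pos. Qed.

Definition weight (alpha beta : R) (k : Z) : R :=
  exp (- beta * IZR (Z.abs k)) / Rpower (br k) alpha.

Lemma weight_pos (alpha beta : R) (k : Z) : 0 < weight alpha beta k.
Proof. apply Rdiv_lt_0_compat; [apply exp_pos | apply Rpower_br_pos]. Qed.

Lemma conv_summand_weight (alpha beta : R) (j m k : Z) :
  exp (- beta * IZR (Z.abs (j - m)) - beta * IZR (Z.abs (m - k)))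
    / (Rpower (br (j - m)) alpha * Rpower (br (m - k)) alpha)
  = weight alpha beta (j - m) * weight alpha beta (m - k).
Proof.
  unfold weight.
  replace (- beta * IZR (Z.abs (j - m)) - beta * IZR (Z.abs (m - k)))
    with (- beta * IZR (Z.abs (j - m)) + - beta * IZR (Z.abs (m - k))) by ring.
  rewrite exp_plus.
  pose proof (Rpower_br_pos (j - m) alpha); pose proof (Rpower_br_pos (m - k) alpha).
  field; lra.
Qed.

Lemma conv_const_weight (alpha beta c : R) (j k : Z) :
  conv_const alpha c -> 0 <= beta ->
  exists l : R, is_lim_seq (rzpsum (fun m => weight alpha beta (j - m) * weight alpha beta (m - k))) l
            /\ l <= c * weight alpha beta (j - k).
Proof.
  intros Hc Hbeta; destruct (Hc beta Hbeta j k) as [[l Hl] Hle].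
  exists l; split.
  - eapply is_lim_seq_ext; [| exact Hl].
    intros N; apply sum_n_ext; intros i; apply conv_summand_weight.
  - rewrite (is_lim_seq_unique _ _ Hl) in Hle; unfold weight, Rdiv in *; simpl in Hle.
    rewrite Rmult_assoc in Hle; exact Hle.
Qed.

Lemma decay_const_ge0 (v : Z -> C) (alpha beta cv : R) :
  (forall k, Cmod (v k) <= cv * weight alpha beta k) -> 0 <= cv.
Proof.
  intros Hdecay; pose proof (Hdecay 0%Z); pose proof (Cmod_ge_0 (v 0%Z)).
  pose proof (weight_pos alpha beta 0); nra.
Qed.

Lemma conv_const_ge0 (alpha c : R) : conv_const alpha c -> 0 <= c.
Proof.
  intros Hc; destruct (conv_const_weight alpha 0 c 0 0 Hc (Rle_refl 0)) as [l [Hl Hle]].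
  assert (0 <= l).
  { refine (lim_rzpsum_ge0 _ l _ Hl).
    intros m; pose proof (weight_pos alpha 0 (0 - m)); pose proof (weight_pos alpha 0 (m - 0)).
    nra. }
  pose proof (weight_pos alpha 0 (0 - 0)); nra.
Qed.

Section GBounds.

Variables (v : Z -> C) (alpha beta cv calpha : R).
Hypothesis Hbeta : 0 <= beta.
Hypothesis Hcalpha : conv_const alpha calpha.
Hypothesis Hdecay : forall k, Cmod (v k) <= cv * weight alpha beta k.

Notation w := (weight alpha beta).

Lemma Gmat_bound (j k : Z) :
  Cmod (Gmat v j k) <= 3 * cv * w (j - k) / (br j + br k).
Proof.
  pose proof (decay_const_ge0 v alpha beta cv Hdecay).
  pose proof (weight_pos alpha beta (j - k)).
  pose proof (br_ge1 j); pose proof (br_ge1 k).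
  assert (0 <= cv * w (j - k)) by nra.
  unfold Gmat; destruct (Z.eqb_spec (j * j) (k * k)) as [| Hjk].
  - rewrite Cmod_0; apply Rdiv_le_0_compat; lra.
  - set (d := IZR (Z.abs (j * j - k * k))).
    assert (Hd : br j + br k <= 3 * d).
    { unfold br, d; rewrite <- !plus_IZR, <- mult_IZR; apply IZR_le.
      pose proof (Zabs_add_2_le_3_Zabs_sqr_sub j k Hjk); lia. }
    rewrite Cmod_div, Cmod_R, <- abs_IZR; fold d.
    2:{ intros Hz; apply (f_equal fst) in Hz; simpl in Hz; apply eq_IZR in Hz; lia. }
    apply Rle_trans with (cv * w (j - k) / d).
    + apply Rmult_le_compat_r; [apply Rlt_le, Rinv_0_lt_compat; lra | apply Hdecay].
    + replace (3 * cv * w (j - k) / (br j + br k))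
        with (cv * w (j - k) * / ((br j + br k) / 3)) by (field; lra).
      apply Rmult_le_compat_l; [assumption |].
      apply Rinv_le_contravar; lra.
Qed.

Lemma zsum_Gmat_bound (P : Z -> C) (K : R) (D : Z -> R) (j k : Z) :
  0 <= K -> (forall m, 0 < D m) ->
  (forall m, br j * br k <= D m * (br m + br k)) ->
  (forall m, Cmod (P m) <= K * w (j - m) / D m) ->
  Cmod (zsum (fun m => (P m * Gmat v m k)%C)) <=
    K * (3 * cv) * calpha * w (j - k) / (br j * br k).
Proof.
  intros HK HD HDk HP.
  pose proof (decay_const_ge0 v alpha beta cv Hdecay).
  pose proof (br_ge1 j); pose proof (br_ge1 k).
  set (c := K * (3 * cv) / (br j * br k)).
  assert (Hc : 0 <= c) by (apply Rdiv_le_0_compat; nra).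
  destruct (conv_const_weight alpha beta calpha j k Hcalpha Hbeta) as [l [Hl Hle]].
  apply Rle_trans with (c * l).
  - apply (Cmod_zsum_le _ (fun m => c * (w (j - m) * w (m - k)))).
    + intros m; rewrite Cmod_mult.
      pose proof (br_ge1 m); pose proof (HD m); pose proof (HDk m).
      pose proof (weight_pos alpha beta (j - m)); pose proof (weight_pos alpha beta (m - k)).
      apply Rle_trans with (K * w (j - m) / D m * (3 * cv * w (m - k) / (br m + br k))).
      { apply Rmult_le_compat; try apply Cmod_ge_0; [apply HP | apply Gmat_bound]. }
      set (W := K * (3 * cv) * (w (j - m) * w (m - k))).
      assert (0 <= W) by (apply Rmult_le_pos; nra).
      replace (K * w (j - m) / D m * (3 * cv * w (m - k) / (br m + br k)))
        with (W * / (D m * (br m + br k))) by (unfold W; field; lra).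
      replace (c * (w (j - m) * w (m - k))) with (W * / (br j * br k))
        by (unfold W, c; field; lra).
      apply Rmult_le_compat_l; [assumption |].
      apply Rinv_le_contravar; nra.
    + eapply is_lim_seq_ext; [| apply (is_lim_seq_scal_l _ c _ Hl)].
      intros N; symmetry; apply (sum_n_mult_l c).
  - apply Rle_trans with (c * (calpha * w (j - k))); [apply Rmult_le_compat_l; assumption |].
    right; unfold c; field; lra.
Qed.


Lemma Gpow_bound (n : nat) (j k : Z) :
  Cmod (Gpow v (S (S n)) j k) <=
    (3 * cv) ^ S (S n) * calpha ^ S n * w (j - k) / (br j * br k).
Proof.
  pose proof (decay_const_ge0 v alpha beta cv Hdecay).
  pose proof (conv_const_ge0 alpha calpha Hcalpha).
  revert j k; induction n as [|n IH]; intros j k; pose proof (br_ge1 j); pose proof (br_ge1 k).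
  - eapply Rle_trans.
    + apply (zsum_Gmat_bound (Gpow v 1 j) (3 * cv) (fun m => br j + br m) j k); [lra | ..].
      * intros m; pose proof (br_ge1 m); cbv beta; lra.
      * intros m; pose proof (br_ge1 m); cbv beta.
        assert (0 <= br j * br m) by nra; assert (0 <= br m * (br m + br k)) by nra; nra.
      * intros m; rewrite Gpow_1; apply Gmat_bound.
    + right; simpl; field; nra.
  - eapply Rle_trans.
    + apply (zsum_Gmat_bound (Gpow v (S (S n)) j) ((3 * cv) ^ S (S n) * calpha ^ S n) (fun m => br j * br m) j k).
      * apply Rmult_le_pos; apply pow_le; lra.
      * intros m; pose proof (br_ge1 m); cbv beta; nra.
      * intros m; pose proof (br_ge1 m); cbv beta.
        assert (0 <= br j * br k) by nra; assert (0 <= br j * (br m * br m)) by nra; nra.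
      * intros m; apply IH.
    + right; simpl; field; nra.
Qed.

End GBounds.

Theorem mainTheorem4 (v : Z -> C) (alpha beta cv calpha : R)
  (Hv0 : v 0%Z = 0%C)
  (Hreal : forall k : Z, v (- k)%Z = Cconj (v k))
  (Halpha : 1 < alpha) (Hbeta : 0 <= beta)
  (Hcalpha : conv_const alpha calpha)
  (Hdecay : forall k : Z,
     Cmod (v k) <= cv * exp (- beta * IZR (Z.abs k)) / Rpower (br k) alpha) :
  (forall j k : Z,
     Cmod (Gmat v j k) <=
       3 * cv * exp (- beta * IZR (Z.abs (j - k)))
       / ((br j + br k) * Rpower (br (j - k)) alpha)) /\
  (forall (n : nat) (j k : Z), (2 <= n)%nat ->
     Cmod (Gpow v n j k) <=
       (3 * cv) ^ n * calpha ^ (n - 1) * exp (- beta * IZR (Z.abs (j - k)))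
       / (br j * br k * Rpower (br (j - k)) alpha)).
Proof.
  assert (Hdecay' : forall k, Cmod (v k) <= cv * weight alpha beta k)
    by (intros k; unfold weight, Rdiv; rewrite <- Rmult_assoc; apply Hdecay).
  split.
  - intros j k; pose proof (br_ge1 j); pose proof (br_ge1 k).
    pose proof (Rpower_br_pos (j - k) alpha).
    replace (3 * cv * _ / _) with (3 * cv * weight alpha beta (j - k) / (br j + br k))
      by (unfold weight; field; lra).
    apply Gmat_bound; assumption.
  - intros [|[|n]] j k Hn; [lia | lia |].
    pose proof (br_ge1 j); pose proof (br_ge1 k).
    pose proof (Rpower_br_pos (j - k) alpha).
    replace (S (S n) - 1)%nat with (S n) by lia.
    replace (_ / _) with ((3 * cv) ^ S (S n) * calpha ^ S n * weight alpha beta (j - k)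
                          / (br j * br k)) by (unfold weight; field; nra).
    apply Gpow_bound; assumption.
Qed.
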